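(* Let $d \ge 1$, $p \in [0,1/2)$, $\mathbf{x} \in \mathbb{R}^d$, $G > 0$, $\lambda > 0$. Let measurements $y_k = \langle \mathbf{x}, \mathbf{a}_k\rangle + \epsilon_k$ ($k = 0,1,\dots$) be given, where $\epsilon_k = \xi_k\nu_k$ with $\xi_k$ an indicator equal to $1$ with probability $p$, independent of all other variables, and $\nu_k$ arbitrary (possibly dependent on $\mathbf{x}$ and the measurement vectors). Let $\mathcal{F}_k$ be the $\sigma$-algebra generated by $\{\mathbf{a}_0,\epsilon_0\},\dots,\{\mathbf{a}_{k-1},\epsilon_{k-1}\}$, and assume each $\mathbf{a}_k \in \mathbb{R}^d$ has unit norm and is independent of $\mathcal{F}_k$, the vectors $\sqrt d\,\mathbf{a}_k$ are i.i.d. mean-zero isotropic, and for every $\mathcal{F}_k$-measurable $\mathbf{u}$, $\mathbb{E}_{\mathbf{a}_k}[|\langle \mathbf{u},\mathbf{a}_k\rangle| \mid \mathbf{u}] \ge \widetilde{C}\|\mathbf{u}\|_2/\sqrt d$ for a constant $\widetilde C > 0$. Let $\mathbf{x}_0 = 0$, $\mathbf{x}_{k+1} = \mathbf{x}_k + G\lambda^{-k}\mathrm{sign}(y_k - \langle \mathbf{x}_k,\mathbf{a}_k\rangle)\mathbf{a}_k$, $\mathbf{u}_k := \lambda^k(\mathbf{x} - \mathbf{x}_k)/G$ and $Y_k := \|\mathbf{u}_k\|_2^2$, so that $$Y_{k+1} = \lambda^2\Big\{\|\mathbf{u}_k\|^2 - 2\langle \mathbf{u}_k,\mathbf{a}_k\rangle\,\mathrm{sign}\big(\langle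 \mathbf{u}_k,\mathbf{a}_k\rangle + \lambda^k\epsilon_k/G\big) + 1\Big\}.$$ Suppose $$1 < \lambda^2 \le 1 + \widetilde{C}^2\frac{(1-2p)^2}{49d} < \frac{50}{49},$$ and set $a = \frac{1}{2(\lambda^2-1)}$, $\eta = c^*\sqrt{\lambda^2-1}$ with $$c^* = \frac{1}{8\lambda^2}\Big[\frac{\lambda^2(1-2p)\widetilde C}{\sqrt2\sqrt d} - \sqrt{\lambda^2-1}\Big(\frac32 + \frac{\lambda^2}{2}\Big)\Big].$$ Then $$\mathbb{E}\big[e^{\eta(Y_{k+1} - a)}\mathbb{1}_{\{Y_k < a\}} \mid \mathcal{F}_k\big] \le \exp\Big\{\frac{\widetilde C(1-2p)}{6\sqrt d}\Big\}.$$
   Context: $\mathrm{sign}$ is the sign function. *)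

From HB Require Import structures.
From mathcomp Require Import all_boot all_order all_algebra.
From mathcomp Require Import all_classical all_reals all_analysis.
Set Implicit Arguments. Unset Strict Implicit. Unset Printing Implicit Defensive.
Import Order.TTheory GRing.Theory Num.Theory.
Import numFieldNormedType.Exports.
Local Open Scope classical_set_scope.
Local Open Scope ring_scope.

Section Defs.
Context {R : realType} {d : nat} {dT : measure_display} {T : measurableType dT}.

Definition dotv (u v : 'I_d -> R) : R := \sum_(i < d) u i * v i.
Definition normv (u : 'I_d -> R) : R := Num.sqrt (dotv u u).

(* the sign function, with values in {-1, 1} (sign 0 := 1) *)
Definition sgnR (x : R) : R := if 0 <= x then 1 else -1.

Definition preimgs (f : T -> R) : set (set T) :=
  [set f @^-1` B | B in (measurable : set (set R))].

Definition gen_vec (X : T -> 'I_d -> R) : set (set T) :=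
  \bigcup_(i in [set: 'I_d]) preimgs (fun w => X w i).

Definition sigma_vec (X : T -> 'I_d -> R) : set (set T) := <<s gen_vec X >>.

Definition borel_vec : set (set ('I_d -> R)) :=
  <<s \bigcup_(i in [set: 'I_d])
        [set (fun v : 'I_d -> R => v i) @^-1` B | B in (measurable : set (set R))] >>.

Definition filtF (a : nat -> T -> 'I_d -> R) (eps : nat -> T -> R) (k : nat)
  : set (set T) :=
  <<s \bigcup_(j in [set j : nat | (j < k)%N]) (gen_vec (a j) `|` preimgs (eps j)) >>.

Definition indep2 (P : probability T R) (S1 S2 : set (set T)) : Prop :=
  forall A B, S1 A -> S2 B -> P (A `&` B) = (P A * P B)%E.

Definition mutual_indep (P : probability T R) (S : nat -> set (set T)) : Prop :=
  forall (s : seq nat) (A : nat -> set T), uniq s ->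
    (forall j, j \in s -> S j (A j)) ->
    P (\bigcap_(j in [set` s]) A j) = (\prod_(j <- s) P (A j))%E.

(* E[Z | F] <= c almost surely, for a nonnegative random variable Z, written
   through the defining property of conditional expectation *)
Definition condexp_le (P : probability T R) (F : set (set T)) (Z : T -> R) (c : R)
  : Prop :=
  forall B, F B -> (\int[P]_(w in B) (Z w)%:E <= c%:E * P B)%E.

(* E[Z | G] >= g almost surely (g G-measurable), via the defining property *)
Definition condexp_ge (P : probability T R) (F : set (set T)) (Z g : T -> R)
  : Prop :=
  forall B, F B -> (\int[P]_(w in B) (g w)%:E <= \int[P]_(w in B) (Z w)%:E)%E.

Definition vec_meas_wrt (F : set (set T)) (u : T -> 'I_d -> R) : Prop :=
  forall i B, measurable B -> F ((fun w => u w i) @^-1` B).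

Fixpoint iter_x (x : 'I_d -> R) (G lam : R) (a : nat -> T -> 'I_d -> R)
  (eps : nat -> T -> R) (k : nat) (w : T) : 'I_d -> R :=
  match k with
  | 0 => fun _ => 0
  | k'.+1 => fun i =>
      iter_x x G lam a eps k' w i
      + G * lam ^- k'
        * sgnR (dotv x (a k' w) + eps k' w - dotv (iter_x x G lam a eps k' w) (a k' w))
        * a k' w i
  end.

Definition vec_u (x : 'I_d -> R) (G lam : R) (a : nat -> T -> 'I_d -> R)
  (eps : nat -> T -> R) (k : nat) (w : T) : 'I_d -> R :=
  fun i => lam ^+ k * (x i - iter_x x G lam a eps k w i) / G.

Definition Yk (x : 'I_d -> R) (G lam : R) (a : nat -> T -> 'I_d -> R)
  (eps : nat -> T -> R) (k : nat) (w : T) : R :=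
  normv (vec_u x G lam a eps k w) ^+ 2.

End Defs.

Definition cstar {R : realType} (d : nat) (p Ct lam : R) : R :=
  (8 * lam ^+ 2)^-1 *
  (lam ^+ 2 * (1 - 2 * p) * Ct / (Num.sqrt 2 * Num.sqrt d%:R)
   - Num.sqrt (lam ^+ 2 - 1) * (3 / 2 + lam ^+ 2 / 2)).

(* On the event [Y_k < a] the next iterate is controlled deterministically:
   AM-GM with weight r = sqrt a gives 2 |<u_k, a_k>| <= Y_k / r + r, hence
   Y_(k+1) <= lam^2 (sqrt a + 1)^2, and the choice of eta makes
   eta (lam^2 (sqrt a + 1)^2 - a) <= Ct (1 - 2p) / (6 sqrt d).  The integrand is
   therefore bounded pointwise by the right-hand side, so its conditional
   expectation is as well. *)

From mathcomp Require Import all_boot all_order all_algebra.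
From mathcomp Require Import all_classical all_reals all_analysis.
From mathcomp Require Import measurable_realfun ring lra.
Import Order.TTheory GRing.Theory Num.Theory.
Local Open Scope classical_set_scope.
Local Open Scope ring_scope.

Section vectors.
Context {R : realType} {d : nat}.
Implicit Types (u v : 'I_d -> R).

Lemma dotv_ge0 u : 0 <= dotv u u.
Proof. by apply: sumr_ge0 => i _; rewrite -expr2 sqr_ge0. Qed.

Lemma normv_sqr u : normv u ^+ 2 = dotv u u.
Proof. by rewrite sqr_sqrtr // dotv_ge0. Qed.

Lemma dotv_scale (c : R) u v :
  dotv (fun i => c * u i) (fun i => c * v i) = c ^+ 2 * dotv u v.
Proof. by rewrite /dotv mulr_sumr; apply: eq_bigr => i _; ring. Qed.

Lemma dotv_sub_le (r s : R) u v : 0 < r ->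
  dotv (fun i => u i - s * v i) (fun i => u i - s * v i)
  <= dotv u u * (1 + r^-1) + s ^+ 2 * dotv v v * (1 + r).
Proof.
move=> r_gt0; rewrite /dotv.
rewrite [leRHS](_ : _ = \sum_(i < d)
  (u i * u i * (1 + r^-1) + s ^+ 2 * (v i * v i) * (1 + r))); last first.
  by rewrite big_split /= -!mulr_suml -mulr_sumr.
apply: ler_sum => i _; rewrite -subr_ge0.
have -> : u i * u i * (1 + r^-1) + s ^+ 2 * (v i * v i) * (1 + r)
          - (u i - s * v i) * (u i - s * v i)
          = (u i + s * r * v i) ^+ 2 / r by field; rewrite gt_eqF.
by rewrite divr_ge0 ?sqr_ge0 ?ltW.
Qed.

End vectors.

Lemma sgnR_sqr (R : realType) (z : R) : sgnR z ^+ 2 = 1.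
Proof. by rewrite /sgnR; case: ifP; rewrite ?expr1n ?sqrrN ?expr1n. Qed.

Section iteration.
Context {R : realType} {d : nat} {dT : measure_display} {T : measurableType dT}.
Context (x : 'I_d -> R) (G lam : R) (a : nat -> T -> 'I_d -> R) (eps : nat -> T -> R).
Hypotheses (G_neq0 : G != 0) (lam_neq0 : lam != 0).

Lemma vec_u_succ k w : exists s : R, s ^+ 2 = 1 /\
  vec_u x G lam a eps k.+1 w
  = (fun i => lam * (vec_u x G lam a eps k w i - s * a k w i)).
Proof.
rewrite /vec_u /=.
set s := sgnR _; exists s; split; first exact: sgnR_sqr.
apply: funext => i; rewrite exprS.
by field; rewrite G_neq0 expf_neq0.
Qed.

Lemma Yk_succ_le k w (r : R) : normv (a k w) = 1 -> 0 < r ->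
  Yk x G lam a eps k.+1 w
  <= lam ^+ 2 * (Yk x G lam a eps k w * (1 + r^-1) + (1 + r)).
Proof.
move=> a_unit r_gt0; rewrite /Yk; have [s [s_sqr ->]] := vec_u_succ k w.
have a_dot : dotv (a k w) (a k w) = 1 by rewrite -normv_sqr a_unit expr1n.
rewrite !normv_sqr dotv_scale ler_wpM2l ?sqr_ge0 //.
by have := dotv_sub_le r s (vec_u x G lam a eps k w) (a k w) r_gt0; rewrite s_sqr a_dot !mul1r.
Qed.

End iteration.

Lemma cstar_numerator_le (R : realFieldType) (y t z L : R) :
  0 < y -> y < 1 -> 0 < t -> 0 < z -> z ^+ 2 * 2 = 1 -> 0 <= L -> L <= 4 / 3 ->
  (L * y * z - t * (3 / 2 + L / 2)) * (t * (1 / 2 + L) + 2 * L * z) <= 4 / 3 * L * y.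
Proof.
move=> y_gt0 y_lt1 t_gt0 z_gt0 zz L_ge0 L_le.
have -> : (L * y * z - t * (3 / 2 + L / 2)) * (t * (1 / 2 + L) + 2 * L * z)
  = L ^+ 2 * y * (z ^+ 2 * 2) + L * z * t * (y * (1 / 2 + L) - 3 - L)
    - t ^+ 2 * ((3 / 2 + L / 2) * (1 / 2 + L)) by field.
rewrite zz mulr1.
have : L * z * t * (y * (1 / 2 + L) - 3 - L) <= 0.
  by apply: mulr_ge0_le0; [rewrite !mulr_ge0 // ltW | nra].
have : 0 <= t ^+ 2 * ((3 / 2 + L / 2) * (1 / 2 + L)) by rewrite mulr_ge0 ?sqr_ge0 //; nra.
have : L ^+ 2 * y <= 4 / 3 * L * y.
  have : 0 <= L * y * (4 / 3 - L) by rewrite !mulr_ge0 ?subr_ge0 // ltW.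
  nra.
lra.
Qed.

Definition cstar_of_margin {R : rcfType} (y L : R) : R :=
  (8 * L)^-1 * (L * y / Num.sqrt 2 - Num.sqrt (L - 1) * (3 / 2 + L / 2)).

Section drift.
Context {R : rcfType} {y L : R}.
Hypotheses (y_gt0 : 0 < y) (L_gt1 : 1 < L).
Hypotheses (L_le : L <= 1 + y ^+ 2 / 49) (margin_lt : 1 + y ^+ 2 / 49 < 50 / 49).

Local Notation t := (Num.sqrt (L - 1)).
Local Notation aa := ((2 * (L - 1))^-1).

Let y_lt1 : y < 1.
Proof. by have := margin_lt; have := y_gt0; nra. Qed.

Let t_gt0 : 0 < t.
Proof. by rewrite sqrtr_gt0 subr_gt0. Qed.

Let t_sqr : t ^+ 2 = L - 1.
Proof. by rewrite sqr_sqrtr // subr_ge0 ltW. Qed.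

Let t_le : 7 * t <= y.
Proof.
have : (7 * t) ^+ 2 <= y ^+ 2 by rewrite exprMn t_sqr; have := L_le; lra.
by have := t_gt0; have := y_gt0; nra.
Qed.

Let sqrt2_gt0 : 0 < Num.sqrt 2 :> R.
Proof. by rewrite sqrtr_gt0. Qed.

Let sqrt2_sqr : Num.sqrt 2 ^+ 2 = 2 :> R.
Proof. by rewrite sqr_sqrtr. Qed.

Let sqrt_aa : Num.sqrt aa = (Num.sqrt 2 * t)^-1.
Proof.
have -> : aa = ((Num.sqrt 2 * t) ^+ 2)^-1 by rewrite exprMn sqrt2_sqr t_sqr.
by rewrite sqrtrV ?sqr_ge0 // sqrtr_sqr ger0_norm // mulr_ge0 ?ltW.
Qed.

Let inv_sqrt2_ge : 1 / 2 <= (Num.sqrt 2)^-1 :> R.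
Proof.
have : (Num.sqrt 2)^-1 * Num.sqrt 2 = 1 :> R by rewrite mulVf ?gt_eqF.
by have := sqrt2_sqr; have := sqrt2_gt0; nra.
Qed.

Lemma cstar_of_margin_ge0 : 0 <= cstar_of_margin y L.
Proof.
rewrite /cstar_of_margin.
have L_lt : L < 50 / 49 by have := L_le; have := margin_lt; lra.
have y_half : y / 2 <= y / Num.sqrt 2 by have := inv_sqrt2_ge; have := y_gt0; nra.
have y_part : y / 2 <= L * y / Num.sqrt 2.
  have : 0 < y / Num.sqrt 2 by rewrite divr_gt0.
  by have := L_gt1; nra.
have t_part : t * (3 / 2 + L / 2) <= t * 3 by rewrite ler_wpM2l ?ltW //; lra.
rewrite mulr_ge0 ?invr_ge0 ?mulr_ge0 // ?subr_ge0.
all: by have := t_le; have := y_gt0; have := L_gt1; lra.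
Qed.

Lemma cstar_of_margin_growth_le :
  cstar_of_margin y L * t * (L * (aa + 2 * Num.sqrt aa + 1) - aa) <= y / 6.
Proof.
have tE : t * (L * (aa + 2 * Num.sqrt aa + 1) - aa)
          = t * (1 / 2 + L) + 2 * L * (Num.sqrt 2)^-1.
  by rewrite sqrt_aa; field; rewrite !gt_eqF ?subr_gt0.
have L_gt0 : 0 < L by have := L_gt1; lra.
have L_le43 : L <= 4 / 3 by have := L_le; have := margin_lt; lra.
rewrite /cstar_of_margin -(mulrA _ t) tE -(mulrA (8 * L)^-1).
have -> : y / 6 = (8 * L)^-1 * (4 / 3 * L * y) by field; rewrite gt_eqF.
apply: ler_wpM2l; first by rewrite invr_ge0 mulr_ge0 ?ltW.
apply: cstar_numerator_le => //.
- by rewrite exprVn sqrt2_sqr mulVf.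
- exact: ltW.
Qed.

End drift.

Lemma cstarE (R : realType) (d : nat) (p Ct lam : R) :
  cstar d p Ct lam = cstar_of_margin (Ct * (1 - 2 * p) / Num.sqrt d%:R) (lam ^+ 2).
Proof.
rewrite /cstar /cstar_of_margin; congr (_ * (_ - _)); rewrite invfM.
by move: (Num.sqrt 2)^-1 (Num.sqrt d%:R)^-1 => a b; ring.
Qed.

Lemma sqr_margin (R : realType) (d : nat) (p Ct : R) : (0 < d)%N ->
  Ct ^+ 2 * (1 - 2 * p) ^+ 2 / (49 * d%:R)
  = (Ct * (1 - 2 * p) / Num.sqrt d%:R) ^+ 2 / 49.
Proof.
by move=> d_gt0; rewrite !expr_div_n sqr_sqrtr ?ler0n //; field; rewrite pnatr_eq0 -lt0n.
Qed.

Lemma step_exponent_le (R : realType) (d : nat) (p Ct lam Y Y' : R) :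
  (1 <= d)%N -> 0 <= p -> p < 1 / 2 -> 0 < Ct -> 1 < lam ^+ 2 ->
  lam ^+ 2 <= 1 + Ct ^+ 2 * (1 - 2 * p) ^+ 2 / (49 * d%:R) ->
  1 + Ct ^+ 2 * (1 - 2 * p) ^+ 2 / (49 * d%:R) < 50 / 49 ->
  let aa := (2 * (lam ^+ 2 - 1))^-1 in
  0 <= Y -> Y < aa ->
  Y' <= lam ^+ 2 * (Y * (1 + (Num.sqrt aa)^-1) + (1 + Num.sqrt aa)) ->
  cstar d p Ct lam * Num.sqrt (lam ^+ 2 - 1) * (Y' - aa)
  <= Ct * (1 - 2 * p) / (6 * Num.sqrt d%:R).
Proof.
move=> d_ge1 p_ge0 p_lt Ct_gt0 lam_gt1 lam_le bound_lt aa Y_ge0 Y_lt Y'_le.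
have sqrt_d_gt0 : 0 < Num.sqrt d%:R :> R by rewrite sqrtr_gt0 ltr0n.
rewrite sqr_margin // in lam_le bound_lt.
set y := Ct * (1 - 2 * p) / Num.sqrt d%:R in lam_le bound_lt.
have y_gt0 : 0 < y by rewrite divr_gt0 // mulr_gt0 //; lra.
have -> : Ct * (1 - 2 * p) / (6 * Num.sqrt d%:R) = y / 6.
  by rewrite /y; field; rewrite gt_eqF.
rewrite cstarE -/y.
apply: le_trans _ (cstar_of_margin_growth_le y_gt0 lam_gt1 lam_le bound_lt).
apply: ler_wpM2l.
  by rewrite mulr_ge0 ?sqrtr_ge0 ?(cstar_of_margin_ge0 y_gt0 lam_gt1 lam_le bound_lt).
have aa_gt0 : 0 < aa by rewrite /aa invr_gt0; lra.
have r_gt0 : 0 < Num.sqrt aa by rewrite sqrtr_gt0.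
have Y_div : Y / Num.sqrt aa <= Num.sqrt aa.
  by rewrite ler_pdivrMr // -expr2 sqr_sqrtr // ltW.
rewrite lerD2r; apply: le_trans Y'_le _; apply: ler_wpM2l; first exact: sqr_ge0.
rewrite -/aa; lra.
Qed.

Section conditional_bound.
Context {R : realType} {dT : measure_display} {T : measurableType dT}.

Lemma ge0_le_integral_nonmeasurable (mu : {measure set T -> \bar R}) (D : set T)
    (f g : T -> \bar R) :
  (forall x, D x -> (0 <= f x)%E) -> (forall x, D x -> (f x <= g x)%E) ->
  (\int[mu]_(x in D) f x <= \int[mu]_(x in D) g x)%E.
Proof.
move=> f_ge0 fg.
have g_ge0 x : D x -> (0 <= g x)%E by move=> Dx; exact: le_trans (f_ge0 x Dx) (fg x Dx).
rewrite (ge0_integralE _ f_ge0) (ge0_integralE _ g_ge0).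
apply: ereal_sup_le => _ [h hf <-]; exists h => // x.
apply: le_trans (hf x) _; rewrite /patch; case: ifP => // /set_mem; exact: fg.
Qed.

Lemma filtF_measurable {d : nat} (a : nat -> T -> 'I_d -> R) (eps : nat -> T -> R) k :
  (forall j i, measurable_fun [set: T] (fun w => a j w i)) ->
  (forall j, measurable_fun [set: T] (eps j)) ->
  filtF a eps k `<=` measurable.
Proof.
move=> ma meps; apply: smallest_sub; first exact: sigma_algebra_measurable.
move=> _ [j _ [[i _ [B mB <-]]|[B mB <-]]]; rewrite -(setTI (_ @^-1` _)).
- exact: ma.
- exact: meps.
Qed.

Lemma condexp_le_of_bound (P : probability T R) (F : set (set T)) (Z : T -> R) (c : R) :
  F `<=` measurable -> (forall w, 0 <= Z w) -> (forall w, Z w <= c) ->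
  condexp_le P F Z c.
Proof.
move=> F_meas Z_ge0 Z_le B FB.
rewrite -(integral_cst P (F_meas _ FB)).
by apply: ge0_le_integral_nonmeasurable => w _; rewrite lee_fin.
Qed.

End conditional_bound.

Theorem lemma5p3 (R : realType) (d : nat) (dT : measure_display)
  (T : measurableType dT) (P : probability T R)
  (p G lam Ct : R) (x : 'I_d -> R)
  (a : nat -> T -> 'I_d -> R) (xi nu : nat -> T -> R) :
  (1 <= d)%N ->
  0 <= p -> p < 1 / 2 ->
  0 < G -> 0 < lam -> 0 < Ct ->
  (* measurability of the random variables *)
  (forall k i, measurable_fun [set: T] (fun w => a k w i)) ->
  (forall k, measurable_fun [set: T] (xi k)) ->
  (forall k, measurable_fun [set: T] (nu k)) ->
  (* xi_k is an indicator equal to 1 with probability p, independent of all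
     other variables *)
  (forall k w, xi k w = 0 \/ xi k w = 1) ->
  (forall k, P (xi k @^-1` [set 1]) = p%:E) ->
  (forall k, indep2 P (<<s preimgs (xi k) >>)
     (<<s \bigcup_(j in [set: nat]) (gen_vec (a j) `|` preimgs (nu j))
          `|` \bigcup_(j in [set j : nat | j != k]) preimgs (xi j) >>)) ->
  let eps := fun k w => xi k w * nu k w in
  (* unit norm, independent of F_k *)
  (forall k w, normv (a k w) = 1) ->
  (forall k, indep2 P (sigma_vec (a k)) (filtF a eps k)) ->
  (* sqrt d a_k i.i.d., mean zero, isotropic *)
  mutual_indep P (fun k => sigma_vec (a k)) ->
  (forall k V, borel_vec V -> P (a k @^-1` V) = P (a 0%N @^-1` V)) ->
  (forall k i, (\int[P]_w (Num.sqrt d%:R * a k w i)%:E = 0)%E) ->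
  (forall k i j, (\int[P]_w ((Num.sqrt d%:R * a k w i) * (Num.sqrt d%:R * a k w j))%:E
                  = (i == j)%:R%:E)%E) ->
  (* E_{a_k}[ |<u, a_k>| | u ] >= Ct ||u|| / sqrt d for F_k-measurable u *)
  (forall k (u : T -> 'I_d -> R), vec_meas_wrt (filtF a eps k) u ->
     condexp_ge P (sigma_vec u) (fun w => `|dotv (u w) (a k w)|)
       (fun w => Ct * normv (u w) / Num.sqrt d%:R)) ->
  (* step size condition *)
  1 < lam ^+ 2 ->
  lam ^+ 2 <= 1 + Ct ^+ 2 * (1 - 2 * p) ^+ 2 / (49 * d%:R) ->
  1 + Ct ^+ 2 * (1 - 2 * p) ^+ 2 / (49 * d%:R) < 50 / 49 ->
  let aa := (2 * (lam ^+ 2 - 1))^-1 in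
  let eta := cstar d p Ct lam * Num.sqrt (lam ^+ 2 - 1) in
  forall k : nat,
    condexp_le P (filtF a eps k)
      (fun w => expR (eta * (Yk x G lam a eps k.+1 w - aa))
                * (if Yk x G lam a eps k w < aa then 1 else 0))
      (expR (Ct * (1 - 2 * p) / (6 * Num.sqrt d%:R))).
Proof.
move=> d_ge1 p_ge0 p_lt G_gt0 lam_gt0 Ct_gt0 ma mxi mnu _ _ _ eps a_unit _ _ _ _ _ _
  lam_gt1 lam_le bound_lt aa eta k.
apply: condexp_le_of_bound.
- by apply: filtF_measurable => // j; exact: measurable_funM.
- by move=> w; case: ifP => _; rewrite ?mulr1 ?mulr0 ?expR_ge0.
move=> w; case: ifP => [Y_lt|_]; last by rewrite mulr0 expR_ge0.
rewrite mulr1 ler_expR.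
apply: (@step_exponent_le _ _ _ _ _ (Yk x G lam a eps k w)) => //; first exact: sqr_ge0.
apply: Yk_succ_le; rewrite ?gt_eqF //.
by rewrite sqrtr_gt0 invr_gt0; lra.
Qed.
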